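(* Let $n\in\mathbb N$ and let $K_{4n}$ be the complete graph on $4n$ vertices. The graph obtained from $K_{4n}$ by deleting a single edge $\{u,v\}$ exhibits Laplacian perfect state transfer between $u$ and $v$. More generally, if $F$ is any nonempty set of pairwise non-adjacent (vertex-disjoint) edges of $K_{4n}$, then the graph $K_{4n}-F$ exhibits Laplacian perfect state transfer at time $\pi/2$ between the two end vertices of every edge in $F$.
   Context: For a graph with Laplacian $L=D-A$ (degree matrix minus adjacency matrix), $U_L(t)=\exp(-itL)$. The graph exhibits Laplacian perfect state transfer between distinct vertices $u,v$ at time $\tau$ if $U_L(\tau)\mathbf e_u=\gamma\mathbf e_v$ for some $\gamma\in\mathbb C$, where $\mathbf e_u$ is the standard basis vector of $u$. *)

From mathcomp Require Import all_boot all_order all_algebra.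
From mathcomp Require Import all_classical all_reals all_analysis.
From mathcomp Require Import complex.
Import numFieldNormedType.Exports.
Import GRing.Theory Num.Theory.

Set Implicit Arguments.
Unset Strict Implicit.
Unset Printing Implicit Defensive.

Local Open Scope ring_scope.
Local Open Scope classical_set_scope.
Local Open Scope complex_scope.

(* The complex numbers over a real type R, viewed as a normed field
   (the regular module R[i]^o carries the norm topology). *)
Definition Cplx (R : realType) := ((R[i])^o)%type.

Definition expmx (R : realType) (N : nat) (A : 'M[Cplx R]_N) : 'M[Cplx R]_N :=
  lim ((fun m : nat => \sum_(k < m) (k`!%:R)^-1 *: A ^+ k) @ \oo).

(* A simple graph on the vertex set 'I_N is given by a relation adj,
   assumed symmetric and irreflexive where relevant.
   Degree matrix D, adjacency matrix A and Laplacian L = D - A. *)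
Definition adjmx (R : realType) (N : nat) (adj : rel 'I_N) : 'M[Cplx R]_N :=
  \matrix_(i, j) (adj i j)%:R.

Definition degmx (R : realType) (N : nat) (adj : rel 'I_N) : 'M[Cplx R]_N :=
  \matrix_(i, j) (if i == j then #|[set k | adj i k]%SET|%:R else 0).

Definition laplacian (R : realType) (N : nat) (adj : rel 'I_N) : 'M[Cplx R]_N :=
  degmx R adj - adjmx R adj.

Definition UL (R : realType) (N : nat) (adj : rel 'I_N) (t : R) : 'M[Cplx R]_N :=
  expmx (- ('i * t%:C) *: laplacian R adj).

Definition basis_vec (R : realType) (N : nat) (u : 'I_N) : 'cV[Cplx R]_N :=
  delta_mx u 0.

Definition lap_pst_at (R : realType) (N : nat) (adj : rel 'I_N)
    (u v : 'I_N) (tau : R) : Prop :=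
  u != v /\
  exists gamma : Cplx R, UL adj tau *m basis_vec R u = gamma *: basis_vec R v.

Definition lap_pst (R : realType) (N : nat) (adj : rel 'I_N) (u v : 'I_N) : Prop :=
  exists tau : R, lap_pst_at adj u v tau.

Definition complete_minus (N : nat) (F : {set {set 'I_N}}) : rel 'I_N :=
  fun x y => (x != y) && ([set x; y]%SET \notin F).

From mathcomp Require Import all_boot all_order all_algebra.
From mathcomp Require Import all_classical all_reals all_analysis.
From mathcomp Require Import complex.
From mathcomp Require Import ring.
Import numFieldNormedType.Exports.
Import GRing.Theory Num.Theory.
Set Implicit Arguments.
Unset Strict Implicit.
Unset Printing Implicit Defensive.
Local Open Scope ring_scope.

(* The Laplacian of K_N - F is N I - J - L_F, where J is the all-ones matrix
   and L_F the Laplacian of the matching F.  Since J^2 = N J, L_F^2 = 2 L_F and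
   J L_F = L_F J = 0, the matrices J/N, I - J/N - L_F/2 and L_F/2 are
   orthogonal idempotents summing to I, on which the Laplacian acts by 0, N
   and N - 2.  For N = 4n and t = pi/2 the phases exp(-i t lambda) are 1, 1
   and -1, hence U_L(pi/2) = I - L_F, which swaps the ends of every edge of F. *)

Section exp_series.
Local Open Scope classical_set_scope.
Local Open Scope complex_scope.
Variable R : realType.
Local Notation C := (Cplx R).

Definition exp_partial_sum (z : C) (m : nat) : C :=
  \sum_(k < m) (k`!%:R)^-1 * z ^+ k.

Lemma normc_real (x : R) : `|x%:C : C| = `|x|%:C.
Proof. by rewrite normc_def /= expr0n /= addr0 sqrtr_sqr. Qed.

Lemma cvg_real_complex {u : nat -> R} {l : R} :
  u m @[m --> \oo] --> l -> ((u m)%:C : C) @[m --> \oo] --> (l%:C : C).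
Proof.
move=> /cvgrPdist_lt ul; apply/cvgrPdist_lt => e.
rewrite ltcE /= => /andP[/eqP Ie e_gt0].
near=> m; rewrite -rmorphB normc_real ltcE /= Ie eqxx /=.
by near: m; apply: ul.
Unshelve. all: by end_near. Qed.

Lemma expNi_coeff (t : R) k :
  (k`!%:R)^-1 * (- ('i * t%:C)) ^+ k =
    (cos_coeff t k)%:C - 'i * (sin_coeff t k)%:C :> C.
Proof.
rewrite cos_coeffE sin_coeffE /= -mulNr exprMn -[k]odd_double_half.
case: (odd k);
  rewrite /= ?odd_double ?uphalf_double ?half_double ?exprS -mul2n exprM sqrrN sqr_i;
  rewrite !(rmorphM, rmorphXn, rmorphN, rmorph_nat, rmorph1, rmorph0, fmorphV) /=;
  rewrite ?(exprS, mul1r); ring.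
Qed.

Lemma cvg_expNi (t : R) :
  exp_partial_sum (- ('i * t%:C)) m @[m --> \oo] -->
    ((cos t)%:C - 'i * (sin t)%:C : C).
Proof.
have -> : exp_partial_sum (- ('i * t%:C)) =
    fun m => (series (cos_coeff t) m)%:C - 'i * (series (sin_coeff t) m)%:C.
  apply/funext => m; rewrite /exp_partial_sum !seriesEord.
  rewrite (eq_bigr _ (fun (k : 'I_m) _ => expNi_coeff t k)).
  by rewrite sumrB -mulr_sumr !raddf_sum.
have cvg_cos : series (cos_coeff t) m @[m --> \oo] --> cos t.
  by rewrite cos.unlock; exact: is_cvg_series_cos_coeff.
have cvg_sin : series (sin_coeff t) m @[m --> \oo] --> sin t.
  by rewrite sin.unlock; exact: is_cvg_series_sin_coeff.
have cvg_i : (fun=> 'i : C) @ \oo --> ('i : C) by apply: cvg_cst.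
have := cvgB (cvg_real_complex cvg_cos) (cvgM cvg_i (cvg_real_complex cvg_sin)).
by apply.
Qed.
End exp_series.

Section spectral.
Local Open Scope classical_set_scope.
Variables (R : realType) (N k : nat) (P : 'I_k -> 'M[Cplx R]_N).
Hypothesis P_orth : forall i j, P i *m P j = if i == j then P i else 0.
Hypothesis P_sum : \sum_i P i = 1%:M.

Lemma expr_spectral (a : 'I_k -> Cplx R) m :
  (\sum_i a i *: P i) ^+ m = \sum_i a i ^+ m *: P i.
Proof.
elim: m => [|m IHm]; first by rewrite expr0 (eq_bigr _ (fun i _ => scale1r _)) P_sum.
rewrite exprSr IHm mulr_suml; apply: eq_bigr => i _.
rewrite mulr_sumr (bigD1 i) //= big1 => [|j ji].
  by rewrite addr0 -mulmxE -scalemxAl -scalemxAr P_orth eqxx scalerA -exprSr.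
by rewrite -mulmxE -scalemxAl -scalemxAr P_orth eq_sym (negbTE ji) !scaler0.
Qed.

Lemma expmx_spectral (a e : 'I_k -> Cplx R) :
  (forall i, exp_partial_sum (a i) m @[m --> \oo] --> e i) ->
  expmx (\sum_i a i *: P i) = \sum_i e i *: P i.
Proof.
move=> cvg_a; apply: cvg_lim; first exact: norm_hausdorff.
have -> : (fun m => \sum_(j < m) (j`!%:R)^-1 *: (\sum_i a i *: P i) ^+ j) =
    fun m => \sum_i exp_partial_sum (a i) m *: P i.
  apply/funext => m; under eq_bigr do rewrite expr_spectral scaler_sumr.
  rewrite exchange_big /=; apply: eq_bigr => i _.
  by rewrite /exp_partial_sum scaler_suml; under eq_bigr do rewrite scalerA.
apply: cvg_big => [|i _]; first exact: add_continuous.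
exact: cvgZr_tmp.
Qed.
End spectral.

Section annihilating_pair.
Variables (K : fieldType) (N : nat) (A B : 'M[K]_N) (a b : K).
Hypotheses (a_neq0 : a != 0) (b_neq0 : b != 0).
Hypotheses (AA : A *m A = a *: A) (BB : B *m B = b *: B).
Hypotheses (AB : A *m B = 0) (BA : B *m A = 0).

Definition pair_proj : 'I_3 -> 'M[K]_N :=
  fun i => [:: a^-1 *: A; 1%:M - a^-1 *: A - b^-1 *: B; b^-1 *: B]`_i.

Lemma scale_quasi_idem (c : K) (X : 'M[K]_N) : c != 0 -> X *m X = c *: X ->
  (c^-1 *: X) *m (c^-1 *: X) = c^-1 *: X.
Proof.
by move=> c0 XX; rewrite -scalemxAl -scalemxAr XX !scalerA mulrAC mulVf ?mul1r.
Qed.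

Lemma pair_proj_orth i j :
  pair_proj i *m pair_proj j = if i == j then pair_proj i else 0.
Proof.
have PA := scale_quasi_idem a_neq0 AA; have PB := scale_quasi_idem b_neq0 BB.
have PAB : (a^-1 *: A) *m (b^-1 *: B) = 0 by rewrite -scalemxAl -scalemxAr AB !scaler0.
have PBA : (b^-1 *: B) *m (a^-1 *: A) = 0 by rewrite -scalemxAl -scalemxAr BA !scaler0.
case: i j => [[|[|[|//]]] ?] [[|[|[|//]]] ?];
  rewrite /pair_proj /= ?mulmxBl ?mulmxBr ?mul1mx ?mulmx1 ?PA ?PB ?PAB ?PBA;
  by rewrite ?(subrr, subr0, sub0r, oppr0).
Qed.

Lemma pair_proj_sum : \sum_i pair_proj i = 1%:M.
Proof. by rewrite !big_ord_recl big_ord0 /pair_proj /= addr0 subrK addrC subrK. Qed.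
End annihilating_pair.

Section laplacian.
Variables (R : realType) (N : nat).
Local Notation C := (Cplx R).
Local Notation J := (const_mx 1 : 'M[C]_N).
Implicit Type adj : rel 'I_N.

Definition degree adj i := #|[set k | adj i k]|.

Definition complement adj : rel 'I_N := fun x y => (x != y) && ~~ adj x y.

Lemma degmx_diag adj : degmx R adj = diag_mx (\row_i (degree adj i)%:R).
Proof.
by apply/matrixP => i j; rewrite !mxE; case: eqP => [->|]; rewrite ?mulr1n ?mulr0n.
Qed.

Lemma sum_adj adj i : \sum_k (adj i k)%:R = (degree adj i)%:R :> C.
Proof.
rewrite /degree -sum1_card natr_sum [RHS]big_mkcond /=.
by apply: eq_bigr => k _; rewrite inE; case: (adj i k).
Qed.

Lemma laplacian_mul_const adj : laplacian R adj *m J = 0.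
Proof.
apply/matrixP => i j; rewrite !mxE; under eq_bigr do rewrite !mxE mulr1.
by rewrite sumrB sum_adj -big_mkcond (big_pred1 i) ?subrr // => k; rewrite eq_sym.
Qed.

Lemma const_mul_laplacian adj : symmetric adj -> J *m laplacian R adj = 0.
Proof.
move=> adj_sym; rewrite -[J]trmx_const -[laplacian R adj]trmxK -trmx_mul.
suff -> : (laplacian R adj)^T = laplacian R adj by rewrite laplacian_mul_const trmx0.
by apply/matrixP => i j; rewrite !mxE adj_sym eq_sym; case: eqVneq => [->|].
Qed.

Lemma const_mul_const : J *m J = N%:R *: J.
Proof.
apply/matrixP => i j; rewrite !mxE; under eq_bigr do rewrite !mxE mulr1.
by rewrite sumr_const card_ord mulr1.
Qed.

Lemma degree_complement adj i : irreflexive adj ->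
  (degree (complement adj) i + degree adj i).+1 = N.
Proof.
move=> adj_irr; rewrite /degree.
have -> : [set k | complement adj i k] = ~: (i |: [set k | adj i k]).
  by apply/setP => k; rewrite !inE negb_or eq_sym.
have card_closed : #|i |: [set k | adj i k]| = #|[set k | adj i k]|.+1.
  by rewrite cardsU1 inE adj_irr.
by rewrite addnC -addSn -card_closed cardsC card_ord.
Qed.

Lemma laplacian_complement adj : irreflexive adj ->
  laplacian R (complement adj) = N%:R%:M - J - laplacian R adj.
Proof.
move=> adj_irr; apply/matrixP => i j; rewrite !mxE /complement.
case: eqVneq => [<-|ij] /=.
  have := congr1 (fun m => m%:R : C) (degree_complement i adj_irr).
  rewrite /= adj_irr /degree /complement => <- /=.
  by rewrite mulr1n mulrS natrD; ring.
by rewrite mulr0n; case: (adj i j) => /=; ring.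
Qed.
End laplacian.

Section matching.
Variables (R : realType) (N : nat) (F : {set {set 'I_N}}).
Hypothesis F_card : forall e, e \in F -> #|e| = 2%N.
Hypothesis F_disj : forall e e', e \in F -> e' \in F -> e != e' -> [disjoint e & e'].
Local Notation C := (Cplx R).

Definition matched : rel 'I_N := fun x y => [set x; y] \in F.

Lemma matched_sym : symmetric matched.
Proof. by move=> x y; rewrite /matched finset.setUC. Qed.

Lemma matched_neq {x y} : matched x y -> x != y.
Proof. by move/F_card; rewrite cards2; case: (x != y). Qed.

Lemma matched_irr : irreflexive matched.
Proof. by move=> x; apply/negP => /matched_neq; rewrite eqxx. Qed.

Lemma matched_uniq {x y y'} : matched x y -> matched x y' -> y = y'.
Proof.
move=> xy xy'; apply/eqP; apply: contraT => yy'.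
have edges_neq : [set x; y] != [set x; y'].
  apply: contra yy' => /eqP exy.
  have : y \in [set x; y'] by rewrite -exy !inE eqxx orbT.
  by rewrite !inE eq_sym (negbTE (matched_neq xy)).
have := F_disj xy xy' edges_neq; rewrite -setI_eq0 => /eqP /setP /(_ x).
by rewrite !inE eqxx.
Qed.

Lemma degree_matched {x y} : matched x y -> degree matched x = 1%N.
Proof.
move=> xy; rewrite /degree -(cards1 y); apply: eq_card => z.
by rewrite !inE; apply/idP/eqP => [/(matched_uniq xy)|->].
Qed.

Lemma degree_matched_le1 x : (degree matched x <= 1)%N.
Proof.
case: (pickP (matched x)) => [y /degree_matched -> //|unmatched].
rewrite /degree (_ : [set y | matched x y] = finset.set0) ?cards0 //.
by apply/setP => y; rewrite !inE unmatched.
Qed.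

Local Notation B := (adjmx R matched).
Local Notation D := (degmx R matched).
Local Notation L := (laplacian R matched).

Lemma degree_matched_sqr x :
  ((degree matched x)%:R ^+ 2 : C) = (degree matched x)%:R.
Proof.
by case: (degree matched x) (degree_matched_le1 x) => [|[|]] // _;
  rewrite ?expr0n ?expr1n.
Qed.

Lemma degree_mul_matched x y :
  ((degree matched x)%:R * (matched x y)%:R : C) = (matched x y)%:R.
Proof. by case xy: (matched x y); rewrite ?mulr0 // (degree_matched xy) mul1r. Qed.

Lemma adjmx_matched_sqr : B *m B = D.
Proof.
apply/matrixP => i j; rewrite !mxE; case: eqVneq => [<-|ij].
  rewrite -sum_adj; apply: eq_bigr => k _.
  by rewrite !mxE [matched k i]matched_sym -natrM mulnb andbb.
rewrite big1 // => k _; rewrite !mxE -natrM mulnb.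
apply/eqP; rewrite pnatr_eq0 eqb0; apply: contra ij.
by rewrite matched_sym => /andP[ki kj]; rewrite (matched_uniq ki kj).
Qed.

Lemma laplacian_matched_sqr : L *m L = 2%:R *: L.
Proof.
rewrite /laplacian mulmxBl !mulmxBr adjmx_matched_sqr.
rewrite !degmx_diag !mul_diag_mx mul_mx_diag.
apply/matrixP => i j; rewrite !mxE mulrnAr -expr2 degree_matched_sqr degree_mul_matched.
rewrite mulrC [matched i j]matched_sym degree_mul_matched matched_sym.
by move: (_ *+ _) (_%:R) => a b; ring.
Qed.

Lemma laplacian_matched_basis u v : matched u v ->
  (1%:M - L) *m basis_vec R u = basis_vec R v.
Proof.
move=> uv; rewrite /basis_vec -colE; apply/matrixP => i j.
rewrite !mxE [j]ord1 eqxx andbT; case: eqVneq => [->|iu].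
  have := degree_matched uv; rewrite /degree => ->.
  by rewrite matched_irr (negbTE (matched_neq uv)) subr0 subrr.
rewrite /= !sub0r opprK matched_sym.
case: eqVneq => [->|iv]; first by rewrite uv.
by case ui: (matched u i); rewrite // (matched_uniq uv ui) eqxx in iv.
Qed.
End matching.

Lemma cos_pi_muln (R : realType) m : cos (pi *+ m) = (-1) ^+ m :> R.
Proof. by elim: m => [|m IHm]; rewrite ?cos0 // mulrS addrC cosDpi IHm exprS mulN1r. Qed.

Lemma sin_pi_muln (R : realType) m : sin (pi *+ m) = 0 :> R.
Proof. by elim: m => [|m IHm]; rewrite ?sin0 // mulrS addrC sinDpi IHm oppr0. Qed.

Section exp_pihalf.
Local Open Scope classical_set_scope.
Local Open Scope complex_scope.
Variable R : realType.

Lemma cvg_expNi_pihalf m :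
  exp_partial_sum (- ('i * (pi / 2)%:C) * (m.*2)%:R) k @[k --> \oo] -->
    ((-1) ^+ m : Cplx R).
Proof.
have angle : pi / 2 * (m.*2)%:R = pi *+ m :> R.
  by rewrite -mul2n natrM mulrA divfK ?mulr_natr // pnatr_eq0.
have -> : - ('i * (pi / 2)%:C) * (m.*2)%:R = - ('i * (pi *+ m)%:C) :> Cplx R.
  by rewrite -angle [in RHS]rmorphM rmorph_nat mulNr mulrA.
have := @cvg_expNi R (pi *+ m).
by rewrite cos_pi_muln sin_pi_muln rmorph0 mulr0 subr0 rmorphXn rmorphN1.
Qed.
End exp_pihalf.

Section complete_minus_matching.
Local Open Scope complex_scope.
Variables (R : realType) (n : nat) (F : {set {set 'I_(4 * n)}}).
Hypothesis F_card : forall e, e \in F -> #|e| = 2%N.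
Hypothesis F_disj : forall e e', e \in F -> e' \in F -> e != e' -> [disjoint e & e'].
Hypothesis n_gt0 : (0 < n)%N.
Local Notation C := (Cplx R).
Local Notation N := (4 * n)%N.
Local Notation J := (const_mx 1 : 'M[C]_N).
Local Notation L := (laplacian R (matched F)).

Let N_neq0 : (N%:R : C) != 0. Proof. by rewrite pnatr_eq0 muln_eq0 -lt0n n_gt0. Qed.
Let two_neq0 : (2%:R : C) != 0. Proof. by rewrite pnatr_eq0. Qed.

Let P := pair_proj J L N%:R 2%:R.
(* The eigenvalues 0, N and N - 2 are written as 2 m, so that the phase
   exp(-i (pi/2) 2 m) is (-1)^m. *)
Let half_eigen : 'I_3 -> nat := fun i => [:: 0; n.*2; (n.*2).-1]`_i.

Lemma laplacian_complete_minus_spectral :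
  laplacian R (complete_minus F) = \sum_i ((half_eigen i).*2)%:R *: P i.
Proof.
rewrite (_ : complete_minus F = complement (matched F)) //.
have eigen1 : ((n.*2).*2)%:R = N%:R :> C by rewrite -!mul2n mulnA.
have eigen2 : ((n.*2).-1.*2)%:R = N%:R - 2 :> C.
  rewrite -subn1 doubleB -!mul2n mulnA natrB //.
  by rewrite -mulnA leq_pmul2l // muln_gt0 n_gt0.
rewrite (laplacian_complement _ (matched_irr F_card)).
rewrite !big_ord_recl big_ord0 /P /pair_proj /half_eigen /= eigen1 eigen2.
move: L => M; rewrite /= scale0r add0r addr0 !scalerBr !scalerA (mulfV N_neq0).
rewrite scale1r scalemx1.
by rewrite mulrBl (mulfV two_neq0) scalerBl scale1r addrA subrK.
Qed.

Lemma UL_complete_minus_matching : UL (complete_minus F) (pi / 2) = 1%:M - L.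
Proof.
have P_orth := pair_proj_orth N_neq0 two_neq0 (const_mul_const _ _)
  (laplacian_matched_sqr R F_card F_disj) (const_mul_laplacian _ (matched_sym F))
  (laplacian_mul_const _ _).
have cvg_phase i := @cvg_expNi_pihalf R (half_eigen i).
rewrite /UL laplacian_complete_minus_spectral scaler_sumr.
under eq_bigr do rewrite scalerA.
rewrite (expmx_spectral P_orth (pair_proj_sum _ _ _ _) cvg_phase).
rewrite !big_ord_recl big_ord0 /pair_proj /half_eigen /= addr0 expr0.
have odd_eigen : odd (n.*2).-1 by rewrite -(prednK n_gt0) doubleS /= odd_double.
rewrite -[(-1) ^+ n.*2]signr_odd -[(-1) ^+ n.*2.-1]signr_odd odd_eigen odd_double.
rewrite expr1 expr0 !scale1r scaleN1r.
move: L => M; rewrite -!addrA addrCA addNKr -opprD -scalerDl -mulr2n.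
by rewrite -[_ *+ 2]mulr_natr (mulVf two_neq0) scale1r.
Qed.

Lemma pst_complete_minus_matching u v : matched F u v ->
  lap_pst_at (complete_minus F) u v (pi / 2 : R).
Proof.
move=> uv; split; first exact: (matched_neq F_card uv).
exists 1; rewrite scale1r UL_complete_minus_matching.
exact: (laplacian_matched_basis R F_card F_disj uv).
Qed.
End complete_minus_matching.

Lemma ord_mul4_gt0 n (u : 'I_(4 * n)) : (0 < n)%N.
Proof.
by rewrite -(ltn_pmul2l (isT : (0 < 4)%N)) muln0 (leq_ltn_trans (leq0n u) (ltn_ord u)).
Qed.

Theorem corollary2p5 (R : realType) (n : nat) :
  (forall u v : 'I_(4 * n), u != v ->
     lap_pst R (complete_minus [set [set u; v]]%SET) u v) /\
  (forall F : {set {set 'I_(4 * n)}},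
     F != finset.set0 ->
     (forall e, e \in F -> #|e| = 2%N) ->
     (forall e e', e \in F -> e' \in F -> e != e' -> [disjoint e & e']) ->
     forall u v : 'I_(4 * n), u != v -> [set u; v]%SET \in F ->
       lap_pst_at (complete_minus F) u v (pi / 2 : R)).
Proof.
split=> [u v uv|F _ F_card F_disj u v _ uvF].
  exists (pi / 2); apply: (pst_complete_minus_matching R _ _ (ord_mul4_gt0 u)).
  - by move=> e; rewrite inE => /eqP ->; rewrite cards2 uv.
  - by move=> e e'; rewrite !inE => /eqP -> /eqP ->; rewrite eqxx.
  - by rewrite /matched inE.
exact: (pst_complete_minus_matching R F_card F_disj (ord_mul4_gt0 u) uvF).
Qed.
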